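(* Let $\rho$ be a representation of $D^{2,2,2}$, let $\{i,j,k\}=\{1,2,3\}$, and let $a,b\in D^{2,2,2}$. Then: 1. $\psi_i(a)+\psi_i(b)=\psi_i(a+b)$; 2. $\psi_i(a)\cap\psi_i(b)=\psi_i\big((a+x_i)(b+x_jx_k)\big)$; 3. $\psi_i(a)\cap\psi_i(b)=\psi_i\big(a(b+x_i+x_jx_k)\big)$.
   Context: $D^{2,2,2}$ is the modular lattice generated by $x_1,y_1,x_2,y_2,x_3,y_3$ subject only to $x_i\subseteq y_i$ ($i=1,2,3$), with a greatest element $I$ adjoined. Meet is written $ab$, join $a+b$. A representation $\rho$ of $D^{2,2,2}$ in a finite-dimensional vector space $X_0$ is a lattice morphism from $D^{2,2,2}$ to the subspace lattice of $X_0$, with $\rho(I)=X_0$. Write $X_i=\rho(x_i)\subseteq Y_i=\rho(y_i)$. Put $R=Y_1\oplus Y_2\oplus Y_3$ and $X^1_0=\{(\eta_1,\eta_2,\eta_3)\in R:\sum\eta_i=0\}$. Define subspaces of $R$: - $G_i$: triples with $i$-th coordinate in $Y_i$ and the others $0$; - $G'_i$: triples with $i$-th coordinate in $X_i$; - $H'_i$: triples with $i$-th coordinate $0$. $\Phi^+\rho$ is the representation in $X^1_0$ with $\Phi^+\rho(y_i)=G'_i\cap X^1_0$, $\Phi^+\rho(x_i)=H'_i\cap X^1_0$, $\Phi^+\rho(I)=X^1_0$. Set $\nu^1(a)=\Phi^+\rho(a)\subseteq R$. The joint map is $\psi_i(a)=X^1_0+G_i\cap(H'_i+\nu^1(a))$.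 *)

From HB Require Import structures.
From mathcomp Require Import all_boot all_order all_algebra.
Set Implicit Arguments. Unset Strict Implicit. Unset Printing Implicit Defensive.
Import GRing.Theory.
Local Open Scope ring_scope.
Local Open Scope vspace_scope.

(* Lattice terms over the generators of D^{2,2,2}: x_i, y_i (i : 'I_3,
   index 0,1,2 standing for 1,2,3) and the adjoined top I. Every element of
   D^{2,2,2} is the value of such a term, and a representation is a lattice
   morphism, so the value of a representation at an element is the
   evaluation of any term denoting it. *)
Inductive dterm : Type :=
  | Dx of 'I_3
  | Dy of 'I_3
  | DI
  | Dmeet of dterm & dterm
  | Djoin of dterm & dterm.

Section Rep.
Variables (K : fieldType) (W : vectType K).

Fixpoint deval (fx fy : 'I_3 -> {vspace W}) (top : {vspace W}) (a : dterm)
  : {vspace W} :=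
  match a with
  | Dx i => fx i
  | Dy i => fy i
  | DI => top
  | Dmeet a b => (deval fx fy top a :&: deval fx fy top b)%VS
  | Djoin a b => (deval fx fy top a + deval fx fy top b)%VS
  end.
End Rep.

Section Psi.
Variables (K : fieldType) (V : vectType K).
(* the representation rho in X_0 = V: X i = rho(x_i) <= Y i = rho(y_i) *)
Variables (X Y : 'I_3 -> {vspace V}).

Definition V3 := {ffun 'I_3 -> V}.

Definition coordf (i : 'I_3) : 'Hom(V3, V) := linfun (fun f : V3 => f i).
Definition sumf : 'Hom(V3, V) := linfun (fun f : V3 => (\sum_i f i)%R).

Definition Rsp : {vspace V3} := \bigcap_(i < 3) (coordf i @^-1: Y i).
Definition X10 : {vspace V3} := Rsp :&: lker sumf.
Definition Gsp (i : 'I_3) : {vspace V3} :=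
  Rsp :&: \bigcap_(j < 3 | j != i) lker (coordf j).
Definition G'sp (i : 'I_3) : {vspace V3} := Rsp :&: (coordf i @^-1: X i).
Definition H'sp (i : 'I_3) : {vspace V3} := Rsp :&: lker (coordf i).

(* nu^1(a) = Phi^+ rho (a), viewed as a subspace of R *)
Definition nu1 (a : dterm) : {vspace V3} :=
  deval (fun i => H'sp i :&: X10) (fun i => G'sp i :&: X10) X10 a.

Definition psi (i : 'I_3) (a : dterm) : {vspace V3} :=
  X10 + Gsp i :&: (H'sp i + nu1 a).
End Psi.

(** The key observation is that, as a subspace of R, psi_i(a) is the set of
    triples whose coordinate sum lies in pi_i(nu^1(a)), where pi_i is the
    i-th coordinate projection. Joins and meets of such preimages are
    preimages of joins and meets, so everything reduces to computing the
    image of nu^1 under pi_i. On X^1_0 the kernel of pi_i is nu^1(x_i), and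
    nu^1(x_j x_k) lies in that kernel (a triple summing to 0 with two zero
    coordinates is 0); hence pi_i((A + nu^1(x_i)) B) = pi_i(A) pi_i(B) and
    pi_i(B + nu^1(x_j x_k)) = pi_i(B), which gives the three identities. *)
From HB Require Import structures.
From mathcomp Require Import all_boot all_order all_algebra.
Set Implicit Arguments. Unset Strict Implicit. Unset Printing Implicit Defensive.
Import GRing.Theory.
Local Open Scope ring_scope.
Local Open Scope vspace_scope.

Lemma memv_bigcapP {K : fieldType} {vT : vectType K} {I : finType} {P : pred I}
    {Us : I -> {vspace vT}} {w} :
  reflect (forall i, P i -> w \in Us i) (w \in \bigcap_(i | P i) Us i).
Proof.
rewrite memvE; apply: (iffP subv_bigcapP) => sU i /sU; by rewrite memvE.
Qed.

Section ImagePreimage.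
Variables (K : fieldType) (aT rT : vectType K) (f : 'Hom(aT, rT)).

Lemma limg_addv_ker (A L : {vspace aT}) : L <= lker f -> f @: (A + L) = f @: A.
Proof. by rewrite lkerE limgD => /eqP->; rewrite addv0. Qed.

Lemma limg_cap_addv_ker (D A B : {vspace aT}) : A <= D -> B <= D ->
  f @: ((A + (D :&: lker f)) :&: B) = f @: A :&: f @: B.
Proof.
move=> sAD sBD; apply/eqP; rewrite eqEsubv; apply/andP; split.
  apply: subv_trans (limg_cap _ _ _) _.
  by rewrite limg_addv_ker ?capvSr.
apply/subvP=> _ /memv_capP[/memv_imgP[x xA ->] /memv_imgP[z zB fxz]].
rewrite fxz memv_img // memv_cap zB andbT -[z](subrK x) addrC.
apply: memv_add => //; rewrite memv_cap memv_ker linearB /= fxz subrr eqxx andbT.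
by apply: memvB; [exact: (subvP sBD) | exact: (subvP sAD)].
Qed.

Lemma capv_lpreimD (D : {vspace aT}) (U1 U2 : {vspace rT}) : U2 <= f @: D ->
  D :&: f @^-1: (U1 + U2) = (D :&: f @^-1: U1) + (D :&: f @^-1: U2).
Proof.
move=> sU2D; apply/eqP; rewrite eqEsubv subv_add.
rewrite !capvS ?lpreimS ?addvSl ?addvSr // !andbT.
apply/subvP=> w /memv_capP[wD]; rewrite -memv_preim.
case/memv_addP=> u1 u1U1 [u2 u2U2 fw].
have /memv_imgP[d dD fd] := subvP sU2D _ u2U2.
rewrite -[w](subrK d); apply: memv_add; rewrite memv_cap -memv_preim.
  by rewrite memvB //= linearB /= fw fd addrK.
by rewrite dD -fd.
Qed.

Lemma capv_lpreimI (D : {vspace aT}) (U1 U2 : {vspace rT}) :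
  D :&: f @^-1: (U1 :&: U2) = (D :&: f @^-1: U1) :&: (D :&: f @^-1: U2).
Proof.
apply/vspaceP=> w; rewrite !memv_cap -!memv_preim memv_cap.
by rewrite andbACA andbb.
Qed.

End ImagePreimage.

Lemma ord3_third (i j k l : 'I_3) :
  i != j -> i != k -> j != k -> l != i -> l = j \/ l = k.
Proof.
move: i j k l; do 4![case=> [[|[|[|?]]] ?]] => //=; rewrite ?eqE /=;
  by [left; apply/val_inj | right; apply/val_inj].
Qed.

Section Triples.
Variables (K : fieldType) (V : vectType K).

Definition coord_fun (i : 'I_3) (f : V3 V) : V := f i.
Fact coord_fun_is_linear i : linear (coord_fun i).
Proof. by move=> a u v; rewrite /coord_fun !ffunE. Qed.
HB.instance Definition _ i :=
  GRing.isLinear.Build K (V3 V) V _ (coord_fun i) (coord_fun_is_linear i).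

Definition sum_fun (f : V3 V) : V := (\sum_l f l)%R.
Fact sum_fun_is_linear : linear sum_fun.
Proof.
move=> a u v; rewrite /sum_fun scaler_sumr -big_split /=.
by apply: eq_bigr => l _; rewrite !ffunE.
Qed.
HB.instance Definition _ :=
  GRing.isLinear.Build K (V3 V) V _ sum_fun sum_fun_is_linear.

Lemma coordfE i (f : V3 V) : coordf V i f = f i.
Proof. exact: (lfunE (coord_fun i) f). Qed.

Lemma sumfE (f : V3 V) : sumf V f = (\sum_l f l)%R.
Proof. exact: (lfunE sum_fun f). Qed.

Lemma sum_single i (f : V3 V) :
  (forall l, l != i -> f l = 0%R) -> (\sum_l f l)%R = f i.
Proof. by move=> f0; rewrite (bigD1 i) //= big1 ?addr0. Qed.

Definition inj_coord i (v : V) : V3 V := [ffun l => if l == i then v else 0%R].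

Lemma inj_coordE i v l : inj_coord i v l = if l == i then v else 0%R.
Proof. exact: ffunE. Qed.

Lemma sum_inj_coord i v : (\sum_l inj_coord i v l)%R = v.
Proof.
rewrite (sum_single (i := i)) => [|l /negbTE l_i].
  by rewrite inj_coordE eqxx.
by rewrite inj_coordE l_i.
Qed.

End Triples.

Section Psi.
Variables (K : fieldType) (V : vectType K) (X Y : 'I_3 -> {vspace V}).

Lemma mem_Rsp (f : V3 V) : reflect (forall l, f l \in Y l) (f \in Rsp Y).
Proof.
apply: (iffP memv_bigcapP) => fY l.
  by have := fY l isT; rewrite -memv_preim coordfE.
by rewrite -memv_preim coordfE.
Qed.

Lemma mem_X10 (f : V3 V) : f \in X10 Y = (f \in Rsp Y) && (sumf V f == 0%R).
Proof. by rewrite memv_cap memv_ker. Qed.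

Lemma mem_H'sp i (f : V3 V) : f \in H'sp Y i = (f \in Rsp Y) && (f i == 0%R).
Proof. by rewrite memv_cap memv_ker coordfE. Qed.

Lemma mem_Gsp i (f : V3 V) :
  reflect (f \in Rsp Y /\ forall l, l != i -> f l = 0%R) (f \in Gsp Y i).
Proof.
rewrite /Gsp memv_cap; apply: (iffP andP) => -[fR f0]; split=> //.
  by move=> l /(memv_bigcapP f0); rewrite memv_ker coordfE => /eqP.
by apply/memv_bigcapP=> l /f0; rewrite memv_ker coordfE => ->.
Qed.

Lemma inj_coord_Rsp i v : v \in Y i -> inj_coord i v \in Rsp Y.
Proof.
move=> vY; apply/mem_Rsp=> l.
by rewrite inj_coordE; case: eqP => [->|]; rewrite ?mem0v.
Qed.

Lemma limg_coordf_Rsp i : coordf V i @: Rsp Y <= sumf V @: Rsp Y.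
Proof.
apply/subvP=> _ /memv_imgP[w /mem_Rsp wY ->].
by rewrite coordfE -(sum_inj_coord i (w i)) -sumfE memv_img ?inj_coord_Rsp.
Qed.

Lemma psi_lpreimE i (N : {vspace V3 V}) : N <= X10 Y ->
  X10 Y + Gsp Y i :&: (H'sp Y i + N) =
  Rsp Y :&: sumf V @^-1: (coordf V i @: N).
Proof.
move=> sNX; apply/vspaceP=> w; rewrite memv_cap -memv_preim.
apply/idP/andP=> [|[wR /memv_imgP[n nN]]].
  case/memv_addP=> x; rewrite mem_X10 => /andP[xR /eqP x0].
  case=> g /memv_capP[/mem_Gsp[gR g0] /memv_addP[h]].
  rewrite mem_H'sp => /andP[_ /eqP h0] [n nN eg] ->.
  rewrite memvD //; split=> //.
  rewrite linearD /= x0 add0r sumfE (sum_single g0) eg ffunE h0 add0r.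
  by rewrite -coordfE memv_img.
have nR : n \in Rsp Y := subvP (subv_trans sNX (capvSl _ _)) n nN.
have eR : inj_coord i (n i) \in Rsp Y by apply/inj_coord_Rsp/mem_Rsp.
rewrite coordfE => sw; rewrite -[w](subrK (inj_coord i (n i))).
apply: memv_add.
  by rewrite mem_X10 memvB //= linearB /= sw sumfE sum_inj_coord subrr.
rewrite memv_cap; apply/andP; split.
  by apply/mem_Gsp; split=> // l /negbTE l_i; rewrite inj_coordE l_i.
rewrite -[inj_coord i _](subrK n); apply: memv_add => //.
by rewrite mem_H'sp memvB //= !ffunE eqxx subrr.
Qed.

Lemma nu1_sub a : nu1 X Y a <= X10 Y.
Proof.
elim: a => [l|l||a iha b ihb|a iha b ihb] /=; rewrite ?capvSr ?subvv //.
  exact: subv_trans (capvSl _ _) iha.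
by rewrite subv_add iha ihb.
Qed.

Lemma psiE i a : psi X Y i a = Rsp Y :&: sumf V @^-1: (coordf V i @: nu1 X Y a).
Proof. exact/psi_lpreimE/nu1_sub. Qed.

Lemma nu1_join a b : nu1 X Y (Djoin a b) = nu1 X Y a + nu1 X Y b.
Proof. by []. Qed.

Lemma nu1_meet a b : nu1 X Y (Dmeet a b) = nu1 X Y a :&: nu1 X Y b.
Proof. by []. Qed.

Lemma nu1_x i : nu1 X Y (Dx i) = X10 Y :&: lker (coordf V i).
Proof. by rewrite /nu1 /= capvC /H'sp capvA (capv_idPl (capvSl _ _)). Qed.

Lemma nu1_xx_ker i j k : i != j -> i != k -> j != k ->
  nu1 X Y (Dmeet (Dx j) (Dx k)) <= lker (coordf V i).
Proof.
move=> hij hik hjk; rewrite nu1_meet !nu1_x; apply/subvP=> s.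
case/memv_capP=> /memv_capP[+ sj] /memv_capP[_ sk].
rewrite mem_X10 sumfE => /andP[_ /eqP s0].
move: sj sk; rewrite !memv_ker !coordfE => /eqP sj /eqP sk.
by rewrite -s0 (sum_single (i := i)) // => l /(ord3_third hij hik hjk) [->|->].
Qed.

Lemma limg_coordf_nu1 i a : coordf V i @: nu1 X Y a <= sumf V @: Rsp Y.
Proof.
apply: subv_trans (limg_coordf_Rsp i).
by rewrite limgS // (subv_trans (nu1_sub a)) ?capvSl.
Qed.

End Psi.

Theorem mainTheorem5 (K : fieldType) (V : vectType K)
    (X Y : 'I_3 -> {vspace V})
    (hXY : forall i, (X i <= Y i)%VS)
    (i j k : 'I_3) (hij : i != j) (hik : i != k) (hjk : j != k)
    (a b : dterm) :
  [/\ (psi X Y i a + psi X Y i b)%VS = psi X Y i (Djoin a b),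
      (psi X Y i a :&: psi X Y i b)%VS =
        psi X Y i (Dmeet (Djoin a (Dx i)) (Djoin b (Dmeet (Dx j) (Dx k))))
    & (psi X Y i a :&: psi X Y i b)%VS =
        psi X Y i (Dmeet a (Djoin (Djoin b (Dx i)) (Dmeet (Dx j) (Dx k))))].
Proof.
have xx_ker := nu1_xx_ker X Y hij hik hjk.
have nu1_b_xx : nu1 X Y b + nu1 X Y (Dmeet (Dx j) (Dx k)) <= X10 Y.
  by rewrite subv_add !nu1_sub.
rewrite !psiE -capv_lpreimI nu1_join limgD; split.
- by rewrite capv_lpreimD ?limg_coordf_nu1.
- by rewrite nu1_meet !nu1_join nu1_x limg_cap_addv_ker ?nu1_sub // limg_addv_ker.
- rewrite nu1_meet !nu1_join nu1_x -addvA [_ :&: lker _ + _]addvC addvA.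
  rewrite [nu1 X Y a :&: _]capvC limg_cap_addv_ker ?nu1_sub //.
  by rewrite limg_addv_ker // [_ @: nu1 X Y b :&: _]capvC.
Qed.
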